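(* Let $X$ be a Tychonoff space with $|X|>1$ and $I\in\mathbb{A}(X)$. Then: (a) $\mathrm{ecc}(I)=3$ iff $\mathcal{O}(I)$ is not a singleton; (b) $\mathrm{ecc}(I)=2$ iff $\mathcal{O}(I)$ is a singleton and $|X|>2$; (c) $\mathrm{ecc}(I)=1$ iff $\mathcal{O}(I)$ is a singleton and $|X|=2$.
   Context: $C(X)$ denotes the ring of all real-valued continuous functions on $X$; $\mathrm{Coz}(f)=\{x: f(x)\neq 0\}$; for $S\subseteq C(X)$, $\mathcal{O}(S)=\bigcup_{f\in S}\mathrm{Coz}(f)$. $\mathbb{A}(X)$ is the set of nonzero ideals $I$ of $C(X)$ for which there is a nonzero ideal $J$ with $IJ=\{0\}$. $\mathbb{AG}(X)$ has vertex set $\mathbb{A}(X)$, distinct $I,J$ adjacent iff $IJ=\{0\}$. The eccentricity $\mathrm{ecc}(I)$ is the maximum of the distances $d(I,J)$ over vertices $J$. *)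

From Stdlib Require Import Reals.
Open Scope R_scope.

Record topology (X : Type) := {
  is_open : (X -> Prop) -> Prop;
  open_full : is_open (fun _ => True);
  open_inter : forall U V, is_open U -> is_open V -> is_open (fun x => U x /\ V x);
  open_union : forall F : (X -> Prop) -> Prop,
      (forall U, F U -> is_open U) -> is_open (fun x => exists U, F U /\ U x)
}.
Arguments is_open {X} t U.

Definition is_closed {X} (T : topology X) (F : X -> Prop) : Prop :=
  is_open T (fun x => ~ F x).

Definition R_open (U : R -> Prop) : Prop :=
  forall x, U x -> exists eps, eps > 0 /\ forall y, Rabs (y - x) < eps -> U y.

Definition continuous_fun {X} (T : topology X) (f : X -> R) : Prop :=
  forall U, R_open U -> is_open T (fun x => U (f x)).

Definition T1 {X} (T : topology X) : Prop :=
  forall x y : X, x <> y -> exists U, is_open T U /\ U y /\ ~ U x.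

Definition completely_regular {X} (T : topology X) : Prop :=
  forall (F : X -> Prop) (x : X), is_closed T F -> ~ F x ->
    exists f, continuous_fun T f /\ f x = 0 /\ (forall y, F y -> f y = 1)
              /\ (forall y, 0 <= f y <= 1).

Definition tychonoff {X} (T : topology X) : Prop := T1 T /\ completely_regular T.

Definition ideal {X} (T : topology X) (I : (X -> R) -> Prop) : Prop :=
  (forall f, I f -> continuous_fun T f) /\
  I (fun _ => 0) /\
  (forall f g, I f -> I g -> I (fun x => f x + g x)) /\
  (forall f g, I f -> continuous_fun T g -> I (fun x => g x * f x)).

Definition nonzero_ideal {X} (T : topology X) (I : (X -> R) -> Prop) : Prop :=
  ideal T I /\ exists f, I f /\ exists x, f x <> 0.

(** I J = {0}: the ideal generated by all products f g is zero iff every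
    product f g (f in I, g in J) is the zero function. *)
Definition prod_zero {X} (I J : (X -> R) -> Prop) : Prop :=
  forall f g, I f -> J g -> forall x, f x * g x = 0.

Definition annih {X} (T : topology X) (I : (X -> R) -> Prop) : Prop :=
  nonzero_ideal T I /\ exists J, nonzero_ideal T J /\ prod_zero I J.

Definition same_ideal {X} (I J : (X -> R) -> Prop) : Prop :=
  forall f, I f <-> J f.

Definition adj {X} (T : topology X) (I J : (X -> R) -> Prop) : Prop :=
  annih T I /\ annih T J /\ ~ same_ideal I J /\ prod_zero I J.

Inductive walk {X} (T : topology X) :
    nat -> ((X -> R) -> Prop) -> ((X -> R) -> Prop) -> Prop :=
  | walk0 : forall I J, annih T I -> same_ideal I J -> walk T 0 I J
  | walkS : forall n I K J, adj T I K -> walk T n K J -> walk T (S n) I J.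

Definition dist_eq {X} (T : topology X) (I J : (X -> R) -> Prop) (n : nat) : Prop :=
  walk T n I J /\ forall m, (m < n)%nat -> ~ walk T m I J.

Definition ecc_eq {X} (T : topology X) (I : (X -> R) -> Prop) (n : nat) : Prop :=
  (forall J, annih T J -> exists m, (m <= n)%nat /\ dist_eq T I J m) /\
  (exists J, annih T J /\ dist_eq T I J n).

Definition Ocoz {X} (S : (X -> R) -> Prop) (x : X) : Prop :=
  exists f, S f /\ f x <> 0.

Definition is_singleton {X} (A : X -> Prop) : Prop :=
  exists x, forall y, A y <-> y = x.

Definition card_gt1 (X : Type) : Prop := exists x y : X, x <> y.
Definition card_gt2 (X : Type) : Prop :=
  exists x y z : X, x <> y /\ x <> z /\ y <> z.
Definition card_eq2 (X : Type) : Prop :=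
  exists x y : X, x <> y /\ forall z, z = x \/ z = y.

From Stdlib Require Import Reals Lra Lia Classical FunctionalExtensionality PropExtensionality.
Open Scope R_scope.

(* For an ideal I let Ann(I) be the ideal of continuous functions vanishing on
   O(I); then IJ = 0 iff O(I) and O(J) are disjoint, and every ideal K with
   IK = 0 lies in Ann(I).  Any two vertices are at distance at most 3: either
   I - Ann(I) - Ann(J) - J is a walk, or some k1 k2 with k1 in Ann(I), k2 in
   Ann(J) is nonzero and the functions vanishing on its zero set form a common
   neighbour of I and J.
   If O(I) contains a <> b, choose an open G with a in G, G inside O(I), and a
   continuous k vanishing on G with k b = 1.  The annihilator J of the functions
   vanishing off G differs from I at a, meets O(I) at b, and contains Ann(I); a
   common neighbour K of I and J would then satisfy K <= Ann(I) <= J and K^2 = 0,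
   so d(I, J) = 3.
   If O(I) = {x}, a vertex J either misses x (and is adjacent to I) or contains
   x, and then every neighbour of J is a neighbour of I, so ecc(I) <= 2.  With a third point z the same
   construction around z gives a vertex at distance exactly 2; in a two-point
   space every vertex whose O contains x equals I, so ecc(I) = 1. *)

Section CX.

Variables (X : Type) (T : topology X).

Lemma open_ext (U V : X -> Prop) :
  is_open T U -> (forall x, U x <-> V x) -> is_open T V.
Proof.
  intros HU E. replace V with U; auto.
  apply functional_extensionality; intro x; apply propositional_extensionality; apply E.
Qed.

Lemma open_nbhd (P : X -> Prop) :
  (forall x, P x -> exists U, is_open T U /\ U x /\ forall y, U y -> P y) -> is_open T P.
Proof.
  intros H.
  apply (open_ext (fun x => exists U, (is_open T U /\ forall y, U y -> P y) /\ U x)).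
  - apply open_union; tauto.
  - intros x; split.
    + intros [U [[_ HU] Ux]]; auto.
    + intros Px. destruct (H x Px) as [U [OU [Ux HU]]]. exists U; auto.
Qed.

Lemma R_open_ball c r : R_open (fun t => Rabs (t - c) < r).
Proof.
  intros x Hx. exists (r - Rabs (x - c)). split; [lra|].
  intros y Hy. split_Rabs; lra.
Qed.

Lemma R_open_lt c : R_open (fun t => t < c).
Proof. intros x Hx. exists (c - x). split; [lra|]. intros y Hy. split_Rabs; lra. Qed.

Lemma R_open_gt c : R_open (fun t => t > c).
Proof. intros x Hx. exists (x - c). split; [lra|]. intros y Hy. split_Rabs; lra. Qed.

Lemma R_open_neq0 : R_open (fun t => t <> 0).
Proof.
  intros x Hx. exists (Rabs x). split; [apply Rabs_pos_lt; auto|].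
  intros y Hy ->. rewrite Rminus_0_l, Rabs_Ropp in Hy. lra.
Qed.

Lemma continuous_const c : continuous_fun T (fun _ => c).
Proof.
  intros U HU. apply open_nbhd. intros x Uc.
  exists (fun _ => True). split; [apply open_full | auto].
Qed.

Lemma continuous_binop (op : R -> R -> R) (f g : X -> R) :
  (forall s t eps, eps > 0 -> exists d, d > 0 /\ forall s' t',
     Rabs (s' - s) < d -> Rabs (t' - t) < d -> Rabs (op s' t' - op s t) < eps) ->
  continuous_fun T f -> continuous_fun T g -> continuous_fun T (fun x => op (f x) (g x)).
Proof.
  intros Hop Hf Hg U HU. apply open_nbhd. intros x Ux.
  destruct (HU _ Ux) as [eps [Heps HUeps]].
  destruct (Hop (f x) (g x) eps Heps) as [d [Hd Hdelta]].
  exists (fun y => Rabs (f y - f x) < d /\ Rabs (g y - g x) < d). split; [|split].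
  - apply open_inter; [apply (Hf _ (R_open_ball _ _)) | apply (Hg _ (R_open_ball _ _))].
  - rewrite !Rminus_diag, Rabs_R0; auto.
  - intros y [Hfy Hgy]. apply HUeps, Hdelta; auto.
Qed.

Lemma continuous_plus f g :
  continuous_fun T f -> continuous_fun T g -> continuous_fun T (fun x => f x + g x).
Proof.
  apply continuous_binop. intros s t eps Heps. exists (eps / 2). split; [lra|].
  intros s' t' Hs Ht. split_Rabs; lra.
Qed.

Lemma continuous_minus f g :
  continuous_fun T f -> continuous_fun T g -> continuous_fun T (fun x => f x - g x).
Proof.
  apply continuous_binop. intros s t eps Heps. exists (eps / 2). split; [lra|].
  intros s' t' Hs Ht. split_Rabs; lra.
Qed.

Lemma continuous_mult f g :
  continuous_fun T f -> continuous_fun T g -> continuous_fun T (fun x => f x * g x).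
Proof.
  apply continuous_binop. intros s t eps Heps.
  set (c := Rabs s + Rabs t + 1).
  assert (Hc : 0 < c) by (pose proof (Rabs_pos s); pose proof (Rabs_pos t); unfold c; lra).
  exists (Rmin 1 (eps / c)). split.
  { apply Rmin_pos; [lra | apply Rdiv_lt_0_compat; lra]. }
  intros s' t' Hs Ht.
  assert (Hd1 := Rmin_l 1 (eps / c)). assert (Hd2 := Rmin_r 1 (eps / c)).
  assert (Hdc : Rmin 1 (eps / c) * c <= eps).
  { apply (Rmult_le_compat_r c) in Hd2; [|lra].
    unfold Rdiv in Hd2. rewrite Rmult_assoc, Rinv_l, Rmult_1_r in Hd2; lra. }
  (* s' t' - s t = (s' - s) t' + s (t' - t), with |t'| < |t| + 1 *)
  replace (s' * t' - s * t) with ((s' - s) * t' + s * (t' - t)) by ring.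
  assert (Ht' : Rabs t' < Rabs t + 1) by (split_Rabs; lra).
  assert (H1 : Rabs ((s' - s) * t') <= Rabs (s' - s) * (Rabs t + 1)).
  { rewrite Rabs_mult. apply Rmult_le_compat_l; [apply Rabs_pos | lra]. }
  assert (H2 : Rabs (s * (t' - t)) <= Rabs s * Rmin 1 (eps / c)).
  { rewrite Rabs_mult. apply Rmult_le_compat_l; [apply Rabs_pos | lra]. }
  assert (H3 : Rabs (s' - s) * (Rabs t + 1) < Rmin 1 (eps / c) * (Rabs t + 1)).
  { apply Rmult_lt_compat_r; [pose proof (Rabs_pos t); lra | auto]. }
  assert (Hsum : Rmin 1 (eps / c) * (Rabs t + 1) + Rabs s * Rmin 1 (eps / c)
                 = Rmin 1 (eps / c) * c) by (unfold c; ring).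
  eapply Rle_lt_trans; [apply Rabs_triang|]. lra.
Qed.

Lemma open_point_compl (b : X) : T1 T -> is_open T (fun v => v <> b).
Proof.
  intros HT1. apply open_nbhd. intros v Hv.
  destruct (HT1 b v (not_eq_sym Hv)) as [U [OU [Uv Ub]]].
  exists U. split; [|split]; auto. intros y Uy ->. auto.
Qed.

Section Tychonoff.

Hypothesis HT : tychonoff T.

Lemma tychonoff_bump (G : X -> Prop) z :
  is_open T G -> G z ->
  exists k, continuous_fun T k /\ k z = 1 /\ forall v, ~ G v -> k v = 0.
Proof.
  intros OG Gz.
  assert (CG : is_closed T (fun v => ~ G v)).
  { apply (open_ext G); auto. intros x; split; [tauto | apply NNPP]. }
  destruct (proj2 HT _ z CG (fun H => H Gz)) as [f [Cf [fz [f1 _]]]].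
  exists (fun v => 1 - f v). split; [|split].
  - apply continuous_minus; [apply continuous_const | auto].
  - rewrite fz; ring.
  - intros v Gv. rewrite f1; auto; ring.
Qed.

(* G is the part of U where the Urysohn function for (a, {b}) is below 1/2, and k
   is a bump at b supported where that function is above 1/2. *)
Lemma tychonoff_separate (U : X -> Prop) a b :
  is_open T U -> U a -> a <> b ->
  exists G, is_open T G /\ G a /\ (forall v, G v -> U v) /\
    exists k, continuous_fun T k /\ k b = 1 /\ forall v, G v -> k v = 0.
Proof.
  intros OU Ua Hab.
  destruct (proj2 HT (fun v => v = b) a (open_point_compl b (proj1 HT)) Hab)
    as [f [Cf [fa [fb _]]]].
  destruct (tychonoff_bump (fun v => f v > 1/2) b) as [k [Ck [kb k0]]].
  { apply (Cf _ (R_open_gt _)). }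
  { rewrite fb; auto; lra. }
  exists (fun v => U v /\ f v < 1/2). split; [|split; [|split]].
  - apply open_inter; [auto | apply (Cf _ (R_open_lt _))].
  - split; [auto | lra].
  - tauto.
  - exists k. split; [|split]; auto. intros v [_ Hv]. apply k0. lra.
Qed.

End Tychonoff.

Definition zero_on (S : X -> Prop) (h : X -> R) : Prop :=
  continuous_fun T h /\ forall v, S v -> h v = 0.

Definition ann (I : (X -> R) -> Prop) : (X -> R) -> Prop := zero_on (Ocoz I).

Lemma zero_on_ideal S : ideal T (zero_on S).
Proof.
  split; [|split; [|split]].
  - intros f [Cf _]; auto.
  - split; [apply continuous_const | auto].
  - intros f g [Cf Ef] [Cg Eg]. split; [apply continuous_plus; auto|].
    intros v Sv. rewrite Ef, Eg; auto; ring.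
  - intros f g [Cf Ef] Cg. split; [apply continuous_mult; auto|].
    intros v Sv. rewrite Ef; auto; ring.
Qed.

Lemma Ocoz_zero_on S v : Ocoz (zero_on S) v -> ~ S v.
Proof. intros [h [[_ Eh] hv]] Sv. apply hv, Eh, Sv. Qed.

Lemma zero_on_antitone (S S' : X -> Prop) f :
  (forall v, S v -> S' v) -> zero_on S' f -> zero_on S f.
Proof. intros HS [Cf Ef]. split; auto. Qed.

Lemma zero_off_Ocoz (I : (X -> R) -> Prop) f v : I f -> ~ Ocoz I v -> f v = 0.
Proof. intros If Hv. apply NNPP. intros fv. apply Hv. exists f; auto. Qed.

Lemma ideal_scale (I : (X -> R) -> Prop) f c : ideal T I -> I f -> I (fun v => c * f v).
Proof. intros [_ [_ [_ Hmul]]] If. apply (Hmul f (fun _ => c)); [auto | apply continuous_const]. Qed.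

Lemma prod_zero_disjoint (I J : (X -> R) -> Prop) :
  prod_zero I J <-> forall v, Ocoz I v -> Ocoz J v -> False.
Proof.
  split.
  - intros P v [f [If fv]] [g [Jg gv]].
    apply (Rmult_integral_contrapositive_currified _ _ fv gv), P; auto.
  - intros H f g If Jg v.
    destruct (Req_dec (f v) 0) as [E|E]; [rewrite E; ring|].
    destruct (Req_dec (g v) 0) as [E'|E']; [rewrite E'; ring|].
    exfalso. apply (H v); [exists f | exists g]; auto.
Qed.

Lemma prod_zero_sym (I J : (X -> R) -> Prop) : prod_zero I J -> prod_zero J I.
Proof. intros P f g Jf Ig v. rewrite Rmult_comm. auto. Qed.

Lemma prod_zero_ann I : prod_zero I (ann I).
Proof. apply prod_zero_disjoint. intros v Iv Av. exact (Ocoz_zero_on _ v Av Iv). Qed.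

Lemma ann_greatest I K : ideal T K -> prod_zero I K -> forall f, K f -> ann I f.
Proof.
  intros [CK _] P f Kf. split; auto.
  intros v Iv. apply (zero_off_Ocoz K); auto.
  intros Kv. exact (proj1 (prod_zero_disjoint I K) P v Iv Kv).
Qed.

Lemma nonzero_ideal_not_prod_zero_self K : nonzero_ideal T K -> ~ prod_zero K K.
Proof.
  intros [_ [f [Kf [x fx]]]] P.
  exact (proj1 (prod_zero_disjoint K K) P x (ex_intro _ f (conj Kf fx))
           (ex_intro _ f (conj Kf fx))).
Qed.

Lemma annih_of_prod_zero I J :
  nonzero_ideal T I -> nonzero_ideal T J -> prod_zero I J -> annih T I.
Proof. intros NI NJ P. split; eauto. Qed.

Lemma ann_nonzero I : annih T I -> nonzero_ideal T (ann I).
Proof.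
  intros [_ [K [[IdK [k [Kk [w kw]]]] P]]]. split; [apply zero_on_ideal|].
  exists k. split; [apply (ann_greatest I K) | exists w]; auto.
Qed.

Lemma annih_ann I : annih T I -> annih T (ann I).
Proof.
  intros AI. apply (annih_of_prod_zero _ I); [apply ann_nonzero | apply AI |]; auto.
  apply prod_zero_sym, prod_zero_ann.
Qed.

Lemma adj_of_prod_zero I J : annih T I -> annih T J -> prod_zero I J -> adj T I J.
Proof.
  intros AI AJ P. split; [|split; [|split]]; auto.
  intros E. apply (nonzero_ideal_not_prod_zero_self I (proj1 AI)).
  intros f g If Ig. apply P; [|apply E]; auto.
Qed.

Lemma walk_same_ideal I J : walk T 0 I J -> same_ideal I J.
Proof. intros W; inversion W; auto. Qed.

Lemma walk_prod_zero I J : walk T 1 I J -> prod_zero I J.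
Proof.
  intros W; inversion W as [|n' I' K J' HIK HKJ]; subst.
  apply walk_same_ideal in HKJ. destruct HIK as [_ [_ [_ P]]].
  intros f g If Jg. apply P, HKJ; auto.
Qed.

Lemma walk_common_neighbour I J : walk T 2 I J ->
  exists K, nonzero_ideal T K /\ prod_zero I K /\ prod_zero K J.
Proof.
  intros W; inversion W as [|n' I' K J' HIK HKJ]; subst.
  apply walk_prod_zero in HKJ. destruct HIK as [_ [[NK _] [_ P]]]. exists K; auto.
Qed.

Lemma walk_refl I : annih T I -> walk T 0 I I.
Proof. intros AI. constructor; auto. intros f; tauto. Qed.

Lemma walk_step n I K J : annih T I -> annih T K -> prod_zero I K ->
  walk T n K J -> walk T (S n) I J.
Proof. intros AI AK P W. apply (walkS T n I K J); auto. apply adj_of_prod_zero; auto. Qed.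

Lemma walk1 I J : annih T I -> annih T J -> prod_zero I J -> walk T 1 I J.
Proof. intros AI AJ P. apply (walk_step 0 I J J); auto. apply walk_refl; auto. Qed.

Lemma walk2 I K J : annih T I -> annih T J -> nonzero_ideal T K ->
  prod_zero I K -> prod_zero K J -> walk T 2 I J.
Proof.
  intros AI AJ NK P1 P2.
  assert (AK : annih T K) by (apply (annih_of_prod_zero K J); auto; apply AJ).
  apply (walk_step 1 I K J); auto. apply walk1; auto.
Qed.

Lemma dist_of_walk n I J : walk T n I J -> exists m, (m <= n)%nat /\ dist_eq T I J m.
Proof.
  revert I J. induction n as [n IH] using (well_founded_induction Wf_nat.lt_wf).
  intros I J W.
  destruct (classic (exists m, (m < n)%nat /\ walk T m I J)) as [[m [Hm Wm]]|Hmin].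
  - destruct (IH m Hm I J Wm) as [m' [Hm' D]]. exists m'. split; [lia | auto].
  - exists n. split; [lia|]. split; auto. intros m Hm Wm. apply Hmin; eauto.
Qed.

Lemma dist_eq_unique I J a b : dist_eq T I J a -> dist_eq T I J b -> a = b.
Proof.
  intros [Wa Ma] [Wb Mb].
  destruct (Compare_dec.lt_eq_lt_dec a b) as [[H|H]|H]; auto.
  - exfalso; apply (Mb a); auto.
  - exfalso; apply (Ma b); auto.
Qed.

Lemma ecc_eq_unique I n m : ecc_eq T I n -> ecc_eq T I m -> n = m.
Proof.
  intros [Bn [Jn [AJn Dn]]] [Bm [Jm [AJm Dm]]].
  destruct (Bm Jn AJn) as [n' [Hn' Dn']]. destruct (Bn Jm AJm) as [m' [Hm' Dm']].
  pose proof (dist_eq_unique _ _ _ _ Dn Dn'). pose proof (dist_eq_unique _ _ _ _ Dm Dm').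
  lia.
Qed.

Lemma ecc_eq_intro I n :
  (forall J, annih T J -> exists k, (k <= n)%nat /\ walk T k I J) ->
  (exists J, annih T J /\ forall m, (m < n)%nat -> ~ walk T m I J) ->
  ecc_eq T I n.
Proof.
  intros Hbound [J [AJ Hfar]]. split.
  - intros J' AJ'. destruct (Hbound J' AJ') as [k [Hk W]].
    destruct (dist_of_walk k I J' W) as [m [Hm D]]. exists m. split; [lia | auto].
  - exists J. split; auto. destruct (Hbound J AJ) as [k [Hk W]].
    split; auto. replace n with k; auto.
    destruct (Compare_dec.le_lt_eq_dec k n Hk) as [Hlt|]; auto.
    exfalso; exact (Hfar k Hlt W).
Qed.

Lemma walk_le3 I J : annih T I -> annih T J -> exists n, (n <= 3)%nat /\ walk T n I J.
Proof.
  intros AI AJ.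
  destruct (classic (prod_zero (ann I) (ann J))) as [P|P].
  - exists 3%nat. split; auto.
    apply (walk_step 2 I (ann I) J); auto using annih_ann, prod_zero_ann.
    apply (walk_step 1 (ann I) (ann J) J); auto using annih_ann.
    apply walk1; auto using annih_ann, prod_zero_sym, prod_zero_ann.
  - exists 2%nat. split; auto.
    assert (exists k1 k2 w, ann I k1 /\ ann J k2 /\ k1 w * k2 w <> 0)
      as (k1 & k2 & w & [C1 E1] & [C2 E2] & Hw).
    { apply NNPP. intros N. apply P. intros k1 k2 A1 A2 w.
      apply NNPP. intros Hw. apply N. exists k1, k2, w; auto. }
    set (K := zero_on (fun v => k1 v * k2 v = 0)).
    (* O(K) is inside the cozero sets of k1 and k2, hence misses O(I) and O(J) *)
    assert (HK : forall v, Ocoz K v -> k1 v <> 0 /\ k2 v <> 0).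
    { intros v Kv. apply Ocoz_zero_on in Kv. split; intros E; apply Kv; rewrite E; ring. }
    apply (walk2 I K J); auto.
    + split; [apply zero_on_ideal|]. exists (fun v => k1 v * k2 v).
      split; [split; [apply continuous_mult; auto | auto] | eauto].
    + apply prod_zero_disjoint. intros v Iv Kv. apply (proj1 (HK v Kv)), E1, Iv.
    + apply prod_zero_disjoint. intros v Kv Jv. apply (proj2 (HK v Kv)), E2, Jv.
Qed.

Lemma prod_zero_singleton (I J : (X -> R) -> Prop) x :
  (forall v, Ocoz I v <-> v = x) -> ~ Ocoz J x -> prod_zero I J.
Proof.
  intros Hx Jx. apply prod_zero_disjoint. intros v Iv Jv.
  apply Hx in Iv. subst. auto.
Qed.

Lemma walk_le2_singleton I J x : annih T I -> annih T J ->
  (forall v, Ocoz I v <-> v = x) -> exists n, (n <= 2)%nat /\ walk T n I J.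
Proof.
  intros AI AJ Hx.
  destruct (classic (Ocoz J x)) as [Jx|Jx].
  - destruct AJ as [NJ [K [NK P]]] eqn:E. exists 2%nat. split; auto.
    apply (walk2 I K J); auto.
    + apply (prod_zero_singleton I K x Hx). intros Kx.
      exact (proj1 (prod_zero_disjoint J K) P x Jx Kx).
    + apply prod_zero_sym; auto.
  - exists 1%nat. split; auto. apply walk1; auto. apply (prod_zero_singleton I J x); auto.
Qed.

Lemma no_walk2_of_ann_incl I J : (forall f, ann I f -> J f) -> ~ walk T 2 I J.
Proof.
  intros Hincl W. destruct (walk_common_neighbour I J W) as [K [NK [P1 P2]]].
  apply (nonzero_ideal_not_prod_zero_self K NK).
  intros f g Kf Kg. apply P2; auto. apply Hincl, (ann_greatest I K); auto. apply NK.
Qed.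

Lemma same_ideal_Ocoz (I J : (X -> R) -> Prop) v : same_ideal I J -> Ocoz I v <-> Ocoz J v.
Proof. intros E. split; intros [f [Hf fv]]; exists f; split; auto; apply E; auto. Qed.

Section TwoPoints.

Variables (x y : X).
Hypothesis Hxy : forall v, v = x \/ v = y.

(* On {x, y} an ideal K with x in O(K) and y not is spanned by any g in K with g x <> 0. *)
Lemma same_ideal_two_point K :
  ideal T K -> Ocoz K x -> ~ Ocoz K y -> same_ideal K (zero_on (fun v => v = y)).
Proof.
  intros IdK [g [Kg gx]] Ky f. split.
  - intros Kf. split; [apply IdK; auto|]. intros v ->. apply (zero_off_Ocoz K); auto.
  - intros [Cf fy]. replace f with (fun v => f x / g x * g v).
    + apply ideal_scale; auto.
    + apply functional_extensionality. intros v. destruct (Hxy v) as [-> | ->].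
      * field; auto.
      * rewrite (fy y eq_refl), (zero_off_Ocoz K g y); auto. ring.
Qed.

Lemma annih_two_point J : annih T J -> Ocoz J x -> ~ Ocoz J y.
Proof.
  intros [_ [K [[_ [k [Kk [w kw]]]] P]]] Jx Jy.
  assert (Kw : Ocoz K w) by (exists k; auto).
  destruct (Hxy w) as [-> | ->];
    [exact (proj1 (prod_zero_disjoint J K) P x Jx Kw)
    | exact (proj1 (prod_zero_disjoint J K) P y Jy Kw)].
Qed.

Lemma ecc_eq1 I : annih T I -> (forall v, Ocoz I v <-> v = x) -> y <> x -> ecc_eq T I 1.
Proof.
  intros AI Hx Hyx.
  assert (Iy : ~ Ocoz I y) by (intros Iy; apply Hyx, Hx, Iy).
  apply ecc_eq_intro.
  - intros J AJ. destruct (classic (Ocoz J x)) as [Jx|Jx].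
    + exists 0%nat. split; auto. constructor; auto. intros f.
      rewrite (same_ideal_two_point I (proj1 (proj1 AI)) (proj2 (Hx x) eq_refl) Iy f).
      rewrite (same_ideal_two_point J (proj1 (proj1 AJ)) Jx (annih_two_point J AJ Jx) f).
      tauto.
    + exists 1%nat. split; auto. apply walk1; auto. apply (prod_zero_singleton I J x); auto.
  - exists (ann I). split; [apply annih_ann; auto|].
    intros m Hm W. replace m with 0%nat in W by lia. apply walk_same_ideal in W.
    apply (nonzero_ideal_not_prod_zero_self I (proj1 AI)).
    intros f g If Ig. apply (prod_zero_ann I); [|apply W]; auto.
Qed.

End TwoPoints.

Section Tychonoff_witness.

Hypothesis HT : tychonoff T.

Variables (G : X -> Prop) (z : X).
Hypotheses (OG : is_open T G) (Gz : G z).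

Lemma Ocoz_zero_on_compl v : Ocoz (zero_on (fun v => ~ G v)) v -> G v.
Proof. intros Hv. apply NNPP, (Ocoz_zero_on _ v Hv). Qed.

Lemma Ocoz_zero_on_compl_center : Ocoz (zero_on (fun v => ~ G v)) z.
Proof.
  destruct (tychonoff_bump HT G z OG Gz) as [k [Ck [kz k0]]].
  exists k. split; [split |]; auto. lra.
Qed.

Lemma ann_zero_on_compl k : continuous_fun T k -> (forall v, G v -> k v = 0) ->
  ann (zero_on (fun v => ~ G v)) k.
Proof. intros Ck k0. split; auto. intros v Hv. apply k0, Ocoz_zero_on_compl, Hv. Qed.

Lemma annih_ann_zero_on_compl k b :
  continuous_fun T k -> (forall v, G v -> k v = 0) -> k b <> 0 ->
  annih T (ann (zero_on (fun v => ~ G v))).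
Proof.
  intros Ck k0 kb. apply (annih_of_prod_zero _ (zero_on (fun v => ~ G v))).
  - split; [apply zero_on_ideal | exists k; split; [apply ann_zero_on_compl | exists b]; auto].
  - destruct Ocoz_zero_on_compl_center as [h [Sh hz]].
    split; [apply zero_on_ideal | exists h; split; [| exists z]; auto].
  - apply prod_zero_sym, prod_zero_ann.
Qed.

End Tychonoff_witness.

Section Tychonoff_eccentricity.

Hypothesis HT : tychonoff T.

Lemma ecc_eq3 I a b : annih T I -> a <> b -> Ocoz I a -> Ocoz I b -> ecc_eq T I 3.
Proof.
  intros AI Hab [fa [Ifa fa0]] Ib.
  assert (Cfa : continuous_fun T fa) by (apply (proj1 (proj1 (proj1 AI))); auto).
  destruct (tychonoff_separate HT (fun v => fa v <> 0) a b (Cfa _ R_open_neq0) fa0 Hab)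
    as (G & OG & Ga & Gfa & k & Ck & kb & k0).
  set (S := zero_on (fun v => ~ G v)).
  apply ecc_eq_intro.
  - intros J AJ. apply walk_le3; auto.
  - exists (ann S). split; [apply (annih_ann_zero_on_compl HT G a OG Ga k b); auto; lra|].
    intros m Hm W. destruct m as [|[|[|m]]]; [| | | lia].
    + apply walk_same_ideal in W.
      apply (proj1 (prod_zero_disjoint S (ann S)) (prod_zero_ann S) a).
      * apply (Ocoz_zero_on_compl_center HT); auto.
      * apply (same_ideal_Ocoz I _ a W). exists fa; auto.
    + apply walk_prod_zero in W.
      apply (proj1 (prod_zero_disjoint I (ann S)) W b Ib).
      exists k. split; [apply ann_zero_on_compl; auto | lra].
    + apply (no_walk2_of_ann_incl I (ann S)); auto.
      intros f. apply zero_on_antitone. intros v Sv.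
      exists fa. split; auto. apply Gfa, (Ocoz_zero_on_compl G), Sv.
Qed.

Lemma ecc_eq2 I x y z : annih T I -> (forall v, Ocoz I v <-> v = x) ->
  y <> x -> z <> x -> y <> z -> ecc_eq T I 2.
Proof.
  intros AI Hx Hyx Hzx Hyz.
  destruct (tychonoff_separate HT (fun _ => True) z x (open_full X T) Logic.I Hzx)
    as (G1 & OG1 & G1z & _ & kx & Ckx & kxx & kx0).
  destruct (tychonoff_separate HT G1 z y OG1 G1z (not_eq_sym Hyz))
    as (G & OG & Gz & GG1 & ky & Cky & kyy & ky0).
  set (S := zero_on (fun v => ~ G v)).
  apply ecc_eq_intro.
  - intros J AJ. apply (walk_le2_singleton I J x); auto.
  - exists (ann S). split; [apply (annih_ann_zero_on_compl HT G z OG Gz ky y); auto; lra|].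
    intros m Hm W. destruct m as [|[|m]]; [| | lia].
    + apply walk_same_ideal in W. apply Hyx, Hx, (same_ideal_Ocoz I _ y W).
      exists ky. split; [apply ann_zero_on_compl; auto | lra].
    + apply walk_prod_zero in W.
      apply (proj1 (prod_zero_disjoint I (ann S)) W x); [apply Hx; auto|].
      exists kx. split; [apply ann_zero_on_compl; auto | lra].
Qed.

End Tychonoff_eccentricity.

End CX.

Lemma card_gt2_or_eq2 (X : Type) : card_gt1 X -> card_gt2 X \/ card_eq2 X.
Proof.
  intros [a [b Hab]].
  destruct (classic (exists c, c <> a /\ c <> b)) as [[c [Hca Hcb]]|N].
  - left. exists a, b, c. auto.
  - right. exists a, b. split; auto. intros c.
    destruct (classic (c = a)); auto. destruct (classic (c = b)); auto.
    exfalso. apply N. eauto.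
Qed.

Lemma card_gt2_pick {X : Type} (x : X) : card_gt2 X -> exists y z, y <> x /\ z <> x /\ y <> z.
Proof.
  intros [p [q [r [Hpq [Hpr Hqr]]]]].
  destruct (classic (p = x)) as [->|Hp]; [exists q, r; auto|].
  destruct (classic (q = x)) as [->|Hq]; [exists p, r; auto|].
  exists p, q; auto.
Qed.

Lemma card_eq2_pick {X : Type} (x : X) : card_eq2 X -> exists y, y <> x /\ forall v, v = x \/ v = y.
Proof.
  intros [a [b [Hab E]]].
  destruct (E x) as [Ex | Ex]; subst x.
  - exists b. split; auto.
  - exists a. split; auto. intros v. destruct (E v); auto.
Qed.

Lemma not_singleton_other {X : Type} (A : X -> Prop) a :
  A a -> ~ is_singleton A -> exists b, a <> b /\ A b.
Proof.
  intros Aa Hns. apply NNPP. intros N. apply Hns. exists a. intros b. split.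
  - intros Ab. apply NNPP. intros Hba. apply N. eauto.
  - intros ->. auto.
Qed.

Lemma iff3_of_unique (E : nat -> Prop) (P3 P2 P1 : Prop) :
  (forall n m, E n -> E m -> n = m) -> P3 \/ P2 \/ P1 ->
  (P3 -> E 3%nat) -> (P2 -> E 2%nat) -> (P1 -> E 1%nat) ->
  (E 3%nat <-> P3) /\ (E 2%nat <-> P2) /\ (E 1%nat <-> P1).
Proof.
  intros U H h3 h2 h1.
  split; [|split]; split; auto; intros En;
    destruct H as [p|[p|p]]; auto; exfalso;
    first [ discriminate (U _ _ En (h3 p)) | discriminate (U _ _ En (h2 p))
          | discriminate (U _ _ En (h1 p)) ].
Qed.

Theorem mainTheorem10 (X : Type) (T : topology X) (HT : tychonoff T)
  (HX : card_gt1 X) (I : (X -> R) -> Prop) (HI : annih T I) :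
  (ecc_eq T I 3 <-> ~ is_singleton (Ocoz I)) /\
  (ecc_eq T I 2 <-> is_singleton (Ocoz I) /\ card_gt2 X) /\
  (ecc_eq T I 1 <-> is_singleton (Ocoz I) /\ card_eq2 X).
Proof.
  apply iff3_of_unique.
  - intros n m. apply ecc_eq_unique.
  - destruct (classic (is_singleton (Ocoz I))); destruct (card_gt2_or_eq2 X HX); tauto.
  - intros Hns. destruct (proj2 (proj1 HI)) as [f [If [a fa]]].
    assert (Ia : Ocoz I a) by (exists f; auto).
    destruct (not_singleton_other (Ocoz I) a Ia Hns) as [b [Hab Ib]].
    exact (ecc_eq3 X T HT I a b HI Hab Ia Ib).
  - intros [[x Hx] H3]. destruct (card_gt2_pick x H3) as (y & z & Hyx & Hzx & Hyz).
    exact (ecc_eq2 X T HT I x y z HI Hx Hyx Hzx Hyz).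
  - intros [[x Hx] H2]. destruct (card_eq2_pick x H2) as (y & Hyx & Hxy).
    exact (ecc_eq1 X T x y Hxy I HI Hx Hyx).
Qed.
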